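(* Let $G$ be a finite group acting on $X=G$ by left multiplication, so that $\mathbb{C}X=\mathbb{C}G$ is the regular module. Let $\{1\}=G_1<\cdots<G_n=G$ be a chain of subgroups with $\mathcal{R}(G_1),\dots,\mathcal{R}(G_n)$ compatible with respect to $\mathbb{C}X$, and let $\mathcal{B}_1,\dots,\mathcal{B}_n$ be as in the standing setup below. Put $q_j=[G_j:G_{j-1}]$. Then for every $f\in\mathbb{C}G$, $[f]_{\mathcal{B}_n}$ can be computed from $[f]_{\mathcal{B}_1}$ (by successively multiplying by $C(\mathcal{B}_2,\mathcal{B}_1),\dots,C(\mathcal{B}_n,\mathcal{B}_{n-1})$, using only their nonzero entries) with strictly fewer than \[2\sum_{j=2}^n q_j^2\,q_{j+1}\cdots q_n\,d^3(G_{j-1})\] complex arithmetic operations (additions and multiplications).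
   Context: For a finite group $H$ with irreducible complex representations of dimensions $d_1,\dots,d_s$, $d^3(H)=d_1^3+\cdots+d_s^3$. For a finite group $G$, $\mathcal{R}(G)$ denotes a fixed complete set of pairwise inequivalent irreducible complex matrix representations of $G$. For a finite-dimensional $\mathbb{C}G$-module $M$ with ordered basis $\mathcal{B}$, $[g]_{\mathcal{B}}$ denotes the matrix of the action of $g$ with respect to $\mathcal{B}$; $\mathcal{B}$ is a symmetry adapted basis of $M$ with respect to $\mathcal{R}(G)$ if there is a fixed partition of the positions into consecutive blocks such that for every $g\in G$, $[g]_{\mathcal{B}}$ is block diagonal with respect to these blocks and each block equals $\rho(g)$ for some $\rho\in\mathcal{R}(G)$ depending only on the block. Standing setup: $G$ acts on a finite set $X$; $\mathbb{C}X$ is the space of functions $X\to\mathbb{C}$ with $(g\cdot f)(x)=f(g^{-1}x)$, each $x\in X$ is identified with its indicator function, and the standard basis of $\mathbb{C}X$ is $X$ itself; for a union $Y$ of orbits of a subgroup, $\mathbb{C}Y$ is regarded as a submodule of $\mathbb{C}X$. The sets $\mathcal{R}(G_1),\dots,\mathcal{R}(G_n)$ are compatible with respect to $\mathbb{C}X$ if some basis of $\mathbb{C}X$ is symmetry adapted with respect to $\mathcal{R}(G_i)$ (for $\mathbb{C}X$ restricted to $G_i$) for every $i$. For $1\le j\le n$, $\mathcal{B}_j$ is an orbital symmetry adapted basis with respect to $\mathcal{R}(G_1),\dots,\mathcal{R}(G_j)$: the disjoint union, over the $G_j$-orbits $Y\subseteq X$, of bases of $\mathbb{C}Y$ each symmetry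 adapted with respect to $\mathcal{R}(G_i)$ for every $i\le j$; $\mathcal{B}_1$ is the standard basis. For bases $\mathcal{B},\mathcal{B}'$, $[v]_{\mathcal{B}}$ is the coordinate vector and $C(\mathcal{B},\mathcal{B}')$ is the matrix with $C(\mathcal{B},\mathcal{B}')[v]_{\mathcal{B}'}=[v]_{\mathcal{B}}$. *)

From HB Require Import structures.
From mathcomp Require Import all_boot all_order all_algebra all_fingroup all_solvable all_field all_character.
Set Implicit Arguments. Unset Strict Implicit. Unset Printing Implicit Defensive.
Import Order.TTheory GRing.Theory Num.Theory.
Local Open Scope ring_scope.

Record rep_family (gT : finGroupType) (H : {group gT}) := RepFamily {
  rf_num : nat;
  rf_dim : 'I_rf_num -> nat;
  rf_rep : forall i : 'I_rf_num, mx_representation algC H (rf_dim i) }.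
Arguments rf_num {gT H} r.
Arguments rf_dim {gT H} r i.
Arguments rf_rep {gT H} r i.

Definition complete_irr_set (gT : finGroupType) (H : {group gT})
    (R : rep_family H) : Prop :=
  [/\ forall i, mx_irreducible (rf_rep R i),
      forall i j, i != j -> ~ mx_rsim (rf_rep R i) (rf_rep R j)
    & forall (m : nat) (rG : mx_representation algC H m),
        mx_irreducible rG -> exists i, mx_rsim (rf_rep R i) rG].

Definition d3 (gT : finGroupType) (H : {group gT}) (R : rep_family H) : nat :=
  (\sum_(i < rf_num R) rf_dim R i ^ 3)%N.

(* entry (a,b) of a square matrix, with natural-number indices (0 outside) *)
Definition nat_entry (d : nat) (M : 'M[algC]_d) (a b : nat) : algC :=
  match insub a, insub b with
  | Some i, Some j => M i j
  | _, _ => 0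
  end.

Definition blk_start (gT : finGroupType) (H : {group gT}) (R : rep_family H)
    (s : seq 'I_(rf_num R)) (k : nat) : nat :=
  (\sum_(t <- take k s) rf_dim R t)%N.
Arguments blk_start {gT H} R s k.

(* the block-diagonal matrix with consecutive diagonal blocks
   rho_{s_0}(h), rho_{s_1}(h), ..., as a function of natural indices *)
Definition blockdiag_entry (gT : finGroupType) (H : {group gT}) (R : rep_family H)
    (s : seq 'I_(rf_num R)) (h : gT) (a b : nat) : algC :=
  \sum_(k < size s)
    if (blk_start R s k <= a < blk_start R s k.+1)%N &&
       (blk_start R s k <= b < blk_start R s k.+1)%N
    then nat_entry (rf_rep R (tnth (in_tuple s) k) h)
                   (a - blk_start R s k) (b - blk_start R s k)
    else 0.
Arguments blockdiag_entry {gT H} R s h a b.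

(* X = gT (the whole group), with positions indexed by 'I_#|gT| via enum_val.
   Vectors of CX are column vectors 'cV_#|gT|; the standard basis vector e_i is
   the indicator of enum_val i.  The action of g sends the indicator of x to
   the indicator of g x, giving the matrix perm_act g. *)
Definition perm_act (gT : finGroupType) (g : gT) : 'M[algC]_#|{: gT}| :=
  \matrix_(i, j) ((enum_val i == g * enum_val j)%g)%:R.

(* The list of vectors b_0..b_{m-1} (spanning an H-stable subspace M, linearly
   independent) is a symmetry adapted basis of M with respect to R(H):
   there are consecutive blocks (given by the list s of representations of R)
   such that for every h in H the matrix [h]_b is block diagonal with the
   block k equal to rho_{s_k}(h).  [h]_b is characterised by
   h . b_k = \sum_l [h]_b(l,k) b_l. *)
Definition sym_adapted (gT : finGroupType) (H : {group gT}) (R : rep_family H)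
    (m : nat) (b : 'I_m -> 'cV[algC]_#|{: gT}|) : Prop :=
  exists s : seq 'I_(rf_num R),
    (\sum_(t <- s) rf_dim R t)%N = m /\
    forall h, h \in H -> forall k : 'I_m,
      perm_act h *m b k = \sum_(l < m) blockdiag_entry R s h l k *: b l.

(* column k of B lies in C(Y) for the G_j-orbit Y = G_j x *)
Definition col_in (gT : finGroupType) (Y : {set gT})
    (B : 'M[algC]_#|{: gT}|) (k : 'I_#|{: gT}|) : bool :=
  [forall i, (B i k != 0) ==> (enum_val i \in Y)].

(* B (columns = basis vectors) is an orbital symmetry adapted basis with respect
   to R(G_1), ..., R(G_j): it is a basis of CX, each basis vector lies in C(Y)
   for some G_j-orbit Y, and for each G_j-orbit Y the basis vectors lying in
   C(Y), in their induced order, form a basis of C(Y) that is symmetry adapted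
   with respect to R(G_i) for every 1 <= i <= j. *)
Definition orbital_sa (gT : finGroupType) (Gs : nat -> {group gT})
    (Rs : forall i, rep_family (Gs i)) (j : nat) (B : 'M[algC]_#|{: gT}|) : Prop :=
  [/\ B \in unitmx,
      forall k, exists x : gT, col_in ((Gs j) :* x)%g B k
    & forall x : gT,
        let K := [set k | col_in ((Gs j) :* x)%g B k] in
        forall i, (1 <= i <= j)%N ->
          sym_adapted (Rs i) (fun l : 'I_#|K| => col (enum_val l) B)].

(* The change of basis matrix C(B, B'), with C(B,B') [v]_B' = [v]_B,
   when basis vectors are the columns of B and B'. *)
Definition change_basis (N : nat) (B B' : 'M[algC]_N) : 'M[algC]_N :=
  invmx B *m B'.

(* number of complex arithmetic operations used to compute C *m v using only
   the nonzero entries of C: one multiplication per nonzero entry, and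
   (number of nonzero entries - 1) additions in each row with nonzero entries *)
Definition nnz_row (N : nat) (C : 'M[algC]_N) (i : 'I_N) : nat :=
  #|[set j | C i j != 0]|.
Definition sparse_mv_cost (N : nat) (C : 'M[algC]_N) : nat :=
  (\sum_i (nnz_row C i + (nnz_row C i).-1))%N.

From HB Require Import structures.
From mathcomp Require Import all_boot all_order all_algebra all_fingroup all_solvable all_field all_character.
From mathcomp Require Import ring zify.
Import Order.TTheory GRing.Theory Num.Theory.
Set Implicit Arguments. Unset Strict Implicit. Unset Printing Implicit Defensive.

(* Fix j and write H = G_(j-1), C = C(B_j, B_(j-1)).  For an H-orbit Z = H x
   inside the G_j-orbit W = G_j x, the columns of C indexed by the basis
   vectors of B_(j-1) lying in CZ have their nonzero entries in the rows
   indexed by the basis vectors of B_j lying in CW.  Restricted to H, both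
   families are symmetry adapted with respect to R(H), so this block of C
   intertwines two block-diagonal representations of H, and by Schur's lemma
   an entry in a block of type rho can only be nonzero at the matching
   position of a block of type rho.  As CZ is the regular module of H and CW
   is q_j copies of it, rho occurs d_rho times over Z and q_j d_rho times over
   W (orthogonality of characters), so the columns over Z carry at most
   q_j (sum_rho d_rho^3) nonzero entries.  Summing over the
   [G : H] = q_j ... q_n orbits Z, C has at most q_j^2 q_(j+1) ... q_n d^3(H)
   nonzero entries, and a sparse product with N > 0 nonzero entries costs
   fewer than 2N operations. *)

Lemma nat_entryE d (M : 'M[algC]_d) (i j : 'I_d) : nat_entry M i j = M i j.
Proof. by rewrite /nat_entry !valK. Qed.

Section BlockDiagonal.
Variables (gT : finGroupType) (H : {group gT}) (R : rep_family H)
  (s : seq 'I_(rf_num R)).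

Local Notation start := (blk_start R s).
Local Notation rho p := (rf_rep R (tnth (in_tuple s) p)).
Local Notation dim_blk p := (rf_dim R (tnth (in_tuple s) p)).

Lemma blk_start_sumn k : start k = sumn (take k (map (rf_dim R) s)).
Proof. by rewrite /blk_start -map_take sumnE big_map. Qed.

Lemma leq_blk_start a b : a <= b -> start a <= start b.
Proof.
by move=> ab; rewrite !blk_start_sumn -(subnKC ab) takeD sumn_cat leq_addr.
Qed.

Lemma blk_startS (p : 'I_(size s)) : start p.+1 = start p + dim_blk p.
Proof.
rewrite /blk_start (take_nth (tnth (in_tuple s) p)) // -cats1 big_cat big_seq1.
by rewrite [in RHS](tnth_nth (tnth (in_tuple s) p)).
Qed.

Lemma blk_start_size : start (size s) = (\sum_(t <- s) rf_dim R t)%N.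
Proof. by rewrite /blk_start take_size. Qed.

Lemma blk_index_uniq k k' a :
  start k <= a < start k.+1 -> start k' <= a < start k'.+1 -> k = k'.
Proof.
move=> /andP[h1 h2] /andP[h3 h4]; case: (ltngtP k k') => // hk.
  by have := leq_blk_start hk; rewrite leqNgt (leq_ltn_trans h3 h2).
by have := leq_blk_start hk; rewrite leqNgt (leq_ltn_trans h1 h4).
Qed.

Lemma mem_blk (p : 'I_(size s)) i : i < dim_blk p ->
  start p <= start p + i < start p.+1.
Proof. by move=> hi; rewrite leq_addr blk_startS ltn_add2l. Qed.

Lemma blk_pos_lt (p : 'I_(size s)) i : i < dim_blk p -> start p + i < start (size s).
Proof.
move=> hi; apply: leq_trans (leq_blk_start (ltn_ord p)).
by rewrite blk_startS ltn_add2l.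
Qed.

Lemma blockdiag_entry_blk h (p p' : 'I_(size s)) i j :
  i < dim_blk p -> j < dim_blk p' ->
  blockdiag_entry R s h (start p + i) (start p' + j) =
  if p == p' then nat_entry (rho p h) i j else 0%R.
Proof.
move=> hi hj; rewrite /blockdiag_entry (bigD1 p) //= big1 ?addr0; last first.
  move=> k nkp; case: ifP => // /andP[hk _]; case/negP: nkp.
  by apply/eqP/val_inj/(blk_index_uniq hk)/mem_blk.
rewrite mem_blk //=; case: eqP => [e|npp]; first by subst p'; rewrite mem_blk // !addKn.
case: ifP => // hb; case: npp; apply/val_inj/(blk_index_uniq hb).
exact: mem_blk.
Qed.

Lemma big_blk (V : Type) (idx : V) (op : Monoid.com_law idx) (F : nat -> V) :
  \big[op/idx]_(c < start (size s)) F c =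
  \big[op/idx]_(p < size s) \big[op/idx]_(t < dim_blk p) F (start p + t).
Proof.
pose d p := nth 0 (map (rf_dim R) s) p.
have big_prefix k : k <= size s -> \big[op/idx]_(c < start k) F c =
    \big[op/idx]_(p < k) \big[op/idx]_(t < d p) F (start p + t).
  elim: k => [|k IH] hk; first by rewrite /blk_start take0 big_nil !big_ord0.
  have -> : start k.+1 = start k + d k.
    rewrite (blk_startS (Ordinal hk)) /d.
    by rewrite (tnth_nth (tnth (in_tuple s) (Ordinal hk))) (nth_map (tnth (in_tuple s) (Ordinal hk))).
  by rewrite big_split_ord big_ord_recr /= IH // ltnW.
rewrite big_prefix //; apply: eq_bigr => p _.
by rewrite /d (nth_map (tnth (in_tuple s) p)) // [in RHS](tnth_nth (tnth (in_tuple s) p)).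
Qed.

Lemma blockdiag_trace h :
  (\sum_(a < start (size s)) blockdiag_entry R s h a a =
   \sum_(p < size s) \tr (rho p h))%R.
Proof.
rewrite (big_blk _ (fun a => blockdiag_entry R s h a a)); apply: eq_bigr => p _.
by apply: eq_bigr => t _; rewrite blockdiag_entry_blk // eqxx nat_entryE.
Qed.

Lemma blockdiag_row_mul h (p : 'I_(size s)) i (F : nat -> algC) : i < dim_blk p ->
  (\sum_(c < start (size s)) blockdiag_entry R s h (start p + i) c * F c =
   \sum_(t < dim_blk p) nat_entry (rho p h) i t * F (start p + t))%R.
Proof.
move=> hi; rewrite (big_blk _ (fun c => blockdiag_entry R s h (start p + i) c * F c)%R).
rewrite (bigD1 p) //= [X in (_ + X)%R]big1 ?addr0.
  by apply: eq_bigr => t _; rewrite blockdiag_entry_blk // eqxx.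
move=> p' np; apply: big1 => t _.
by rewrite blockdiag_entry_blk // eq_sym (negbTE np) mul0r.
Qed.

Lemma blockdiag_col_mul h (q : 'I_(size s)) j (F : nat -> algC) : j < dim_blk q ->
  (\sum_(c < start (size s)) F c * blockdiag_entry R s h c (start q + j) =
   \sum_(t < dim_blk q) F (start q + t) * nat_entry (rho q h) t j)%R.
Proof.
move=> hj; rewrite (big_blk _ (fun c => F c * blockdiag_entry R s h c (start q + j))%R).
rewrite (bigD1 q) //= [X in (_ + X)%R]big1 ?addr0.
  by apply: eq_bigr => t _; rewrite blockdiag_entry_blk // eqxx.
move=> p' np; apply: big1 => t _.
by rewrite blockdiag_entry_blk // (negbTE np) mulr0.
Qed.

Lemma blk_pos_exists a : a < start (size s) ->
  exists p : 'I_(size s), exists2 i, i < dim_blk p & a = start p + i.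
Proof.
move=> ha; have : 0 < \sum_(c < start (size s)) (val c == a : nat).
  by rewrite (bigD1 (Ordinal ha)) //= eqxx.
rewrite (big_blk _ (fun c => (c == a : nat))).
case: (boolP [exists p : 'I_(size s), [exists t : 'I_(dim_blk p), start p + t == a]]).
  by case/existsP => p /existsP [t /eqP <-]; exists p; exists t.
rewrite negb_exists => /forallP hn; rewrite big1 // => p _; apply: big1 => t _.
by have := hn p; rewrite negb_exists => /forallP /(_ t) /negbTE ->.
Qed.

End BlockDiagonal.

Lemma col_inP (gT : finGroupType) (Y : {set gT}) (B : 'M[algC]_#|{: gT}|) k :
  reflect (forall i, B i k != 0%R -> enum_val i \in Y) (col_in Y B k).
Proof.
apply: (iffP forallP) => [h i nz | h i]; first by have := h i; rewrite nz.
by apply/implyP => /h.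
Qed.

Lemma cfdot_rep_family (gT : finGroupType) (H : {group gT}) (R : rep_family H) :
  complete_irr_set R -> forall t i,
  '[cfRepr (rf_rep R t), cfRepr (rf_rep R i)]%R = (t == i)%:R%R.
Proof.
case=> irrR inR _ t i.
have inirr u : cfRepr (rf_rep R u) \in irr H.
  by apply/irr_reprP; exists (Representation (rf_rep R u)); [exact: irrR|].
have [a ea] := irrP (inirr t); have [b eb] := irrP (inirr i).
rewrite ea eb cfdot_irr; suff -> : (a == b) = (t == i) by [].
case: (eqVneq t i) => [eti|nti].
  by subst i; apply/eqP/(@irr_inj _ H); rewrite -ea -eb.
apply/negP => /eqP eab; apply: (inR _ _ nti); apply/cfRepr_rsimP.
by rewrite ea eb eab.
Qed.

Section OrbitalBasis.
Local Open Scope ring_scope.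

Lemma mulmx_col_entry n (A B : 'M[algC]_n) i j :
  (A *m col j B) i 0 = (A *m B) i j.
Proof. by rewrite !mxE; apply: eq_bigr => y _; rewrite !mxE. Qed.

Lemma sum_enum_val_mem (gT : finType) (A : {set gT}) :
  \sum_(y : 'I_#|gT|) (enum_val y \in A)%:R = #|A|%:R :> algC.
Proof.
rewrite -(big_enum_val (fun x : gT => (x \in A)%:R : algC)) /=.
rewrite -sum1_card natr_sum [RHS]big_mkcond /=; apply: eq_bigr => x _.
by case: (x \in A).
Qed.

Variables (gT : finGroupType) (G : {group gT}) (B : 'M[algC]_#|{: gT}|) (x0 : gT).
Hypotheses (uB : B \in unitmx) (orbB : forall k, exists x, col_in (G :* x)%g B k).
Local Notation W := (G :* x0)%g.
Local Notation K := [set k | col_in W B k].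
Local Notation iB := (invmx B).

Lemma col_notin_orbit k y : k \notin K -> B y k != 0 -> enum_val y \notin W.
Proof.
rewrite inE => nK nz; apply/negP => yW; case/negP: nK.
have [x cx] := orbB k; have yx := col_inP _ _ _ cx y nz.
by have <- : (G :* x)%g = W by rewrite -(rcoset_eqP yx) (rcoset_eqP yW).
Qed.

Lemma orbit_projector y y' :
  \sum_(k in K) B y k * iB k y' = ((y == y') && (enum_val y \in W))%:R.
Proof.
have : (B *m iB) y y' = (y == y')%:R by rewrite mulmxV // mxE.
rewrite mxE => e.
case yW : (enum_val y \in W); last first.
  rewrite andbF big1 // => k; rewrite inE => /col_inP hk.
  case: (eqVneq (B y k) 0) => [->|nz]; first by rewrite mul0r.
  by have := hk y nz; rewrite yW.
rewrite andbT -e [RHS](bigID (mem K)) /= [X in _ = _ + X]big1 ?addr0 //.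
move=> k nK; case: (eqVneq (B y k) 0) => [->|nz]; first by rewrite mul0r.
by have := col_notin_orbit nK nz; rewrite yW.
Qed.

Lemma invmx_orbit_out k y : k \in K -> enum_val y \notin W -> iB k y = 0.
Proof.
move=> kK yW.
have : \sum_y1 iB k y1 * (\sum_(k' in K) B y1 k' * iB k' y) = 0.
  rewrite big1 // => y1 _; rewrite orbit_projector.
  by case: (eqVneq y1 y) => [->|]; rewrite ?(negbTE yW) mulr0.
move <-; transitivity (\sum_(k' in K) (iB *m B) k k' * iB k' y).
  rewrite (bigD1 k) //= mulVmx // mxE eqxx mulr1n mul1r big1 ?addr0 //.
  by move=> k' /andP[_ nk]; rewrite mxE eq_sym (negbTE nk) mulr0n mul0r.
under [RHS]eq_bigr do rewrite big_distrr /=.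
rewrite [RHS]exchange_big /=; apply: eq_bigr => k' _.
by rewrite mxE big_distrl /=; apply: eq_bigr => y1 _; rewrite mulrA.
Qed.

Lemma invmx_coord (a : 'I_#|K| -> algC) l :
  (iB *m \sum_(l' < #|K|) a l' *: col (enum_val l') B) (enum_val l) 0 = a l.
Proof.
rewrite mulmx_sumr summxE (bigD1 l) //= big1 ?addr0.
  by rewrite -scalemxAr colE mulKmx // !mxE !eqxx mulr1.
move=> l' nl; rewrite -scalemxAr colE mulKmx // !mxE.
by rewrite (inj_eq enum_val_inj) eq_sym (negbTE nl) mulr0.
Qed.

Lemma orbit_expand (v : 'cV[algC]_#|{: gT}|) :
  (forall y, v y 0 != 0 -> enum_val y \in W) ->
  v = \sum_(l < #|K|) (iB *m v) (enum_val l) 0 *: col (enum_val l) B.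
Proof.
move=> sv; apply/matrixP => z o; rewrite (ord1 o) summxE.
transitivity (\sum_w v w 0 * ((z == w) && (enum_val z \in W))%:R).
  rewrite (bigD1 z) //= big1 ?addr0 => [|w nwz]; last by rewrite eq_sym (negbTE nwz) mulr0.
  rewrite eqxx /=; case: (eqVneq (v z 0) 0) => [->|nz]; first by rewrite mul0r.
  by rewrite (sv _ nz) mulr1.
under eq_bigr do rewrite -orbit_projector big_distrr.
rewrite exchange_big /= big_enum_val; apply: eq_bigr => c _.
by rewrite !mxE big_distrl /=; apply: eq_bigr => w _; ring.
Qed.

Variables (H : {group gT}) (R : rep_family H) (s : seq 'I_(rf_num R)).
Hypothesis sizeK : (\sum_(t <- s) rf_dim R t)%N = #|K|.
Hypothesis adaptK : forall h, h \in H -> forall k : 'I_#|K|,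
  perm_act h *m col (enum_val k) B =
  \sum_(l < #|K|) blockdiag_entry R s h l k *: col (enum_val l) B.

Lemma blockdiag_coord h (hH : h \in H) (a b : 'I_#|K|) :
  blockdiag_entry R s h a b = (iB *m (perm_act h *m col (enum_val b) B)) (enum_val a) 0.
Proof. by rewrite adaptK // invmx_coord. Qed.

(* Only h = 1 fixes a point of W, so the permutation character of CW is |W| [h = 1]. *)
Lemma blockdiag_orbit_trace h (hH : h \in H) :
  \sum_(a < #|K|) blockdiag_entry R s h a a = (#|W| * (h == 1%g))%:R.
Proof.
under eq_bigr do rewrite blockdiag_coord // mxE.
transitivity (\sum_y \sum_z perm_act h y z * \sum_(k in K) B z k * iB k y).
  rewrite exchange_big; apply: eq_bigr => y _.
  under eq_bigr do rewrite mxE big_distrr.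
  rewrite exchange_big; apply: eq_bigr => z _.
  rewrite [in RHS]big_enum_val big_distrr; apply: eq_bigr => a _.
  by rewrite !mxE /=; ring.
under eq_bigr do under eq_bigr do rewrite orbit_projector.
transitivity (\sum_(y : 'I_#|{: gT}|) (h == 1%g)%:R * (enum_val y \in W)%:R : algC).
  apply: eq_bigr => y _; rewrite (bigD1 y) //= big1 ?addr0.
    rewrite eqxx /= mxE -[X in X == _](mul1g (enum_val y)).
    by rewrite (inj_eq (mulIg _)) eq_sym.
  by move=> z nzy; rewrite (negbTE nzy) mulr0.
by rewrite -big_distrr /= sum_enum_val_mem natrM mulrC.
Qed.

Lemma orbit_multiplicity (cR : complete_irr_set R) i :
  (count_mem i s * #|H| = rf_dim R i * #|G|)%N.
Proof.
pose phi : 'CF(H) := \sum_(p < size s) cfRepr (rf_rep R (tnth (in_tuple s) p)).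
have phiE h : h \in H -> phi h = (#|G| * (h == 1%g))%:R.
  move=> hH; rewrite sum_cfunE.
  under eq_bigr do rewrite cfunE hH mulr1n.
  by rewrite -blockdiag_trace -(card_rcoset G x0) -blockdiag_orbit_trace // blk_start_size sizeK.
have phi_count : '[phi, cfRepr (rf_rep R i)] = (count_mem i s)%:R.
  rewrite cfdot_suml; under eq_bigr do rewrite cfdot_rep_family //.
  rewrite -(big_tnth 0 +%R s xpredT (fun t => (t == i)%:R : algC)) /=.
  rewrite -natr_sum -sum1_count; congr (_%:R).
  by rewrite [RHS]big_mkcond /=; apply: eq_bigr => t _; case: (t == i).
have phi_dim : '[phi, cfRepr (rf_rep R i)] = #|H|%:R^-1 * (#|G|%:R * (rf_dim R i)%:R).
  rewrite cfdotE (bigD1 1%g) ?group1 //= big1 ?addr0.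
    by rewrite phiE ?group1 // eqxx muln1 cfRepr1 conjC_nat.
  by move=> h /andP[hH nh]; rewrite phiE // (negbTE nh) muln0 mul0r.
apply/eqP; rewrite -(eqr_nat algC) !natrM -phi_count phi_dim.
by apply/eqP; field; exact: neq0CG.
Qed.

End OrbitalBasis.

Section Schur.
Local Open Scope ring_scope.
Variables (gT : finGroupType) (H : {group gT}) (R : rep_family H).
Hypothesis irrR : complete_irr_set R.

Lemma rep_family_intertwiner_eq u v (M : 'M[algC]_(rf_dim R u, rf_dim R v)) :
  (forall h, h \in H -> rf_rep R u h *m M = M *m rf_rep R v h) ->
  M != 0 -> u = v.
Proof.
case: irrR => irr inequiv _ hM nzM.
have /mx_irrP [_ irrv] := irr v; have /mx_irrP [_ irru] := irr u.
have fullM : row_full M.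
  have modM : mxmodule (rf_rep R v) <<M>>%MS.
    rewrite (eqmx_module _ (genmxE M)); apply/mxmoduleP => h hH.
    by rewrite -hM // submxMl.
  have := irrv _ modM; rewrite (eqmx_eq0 (genmxE M)) => /(_ nzM).
  by rewrite /row_full genmxE.
have freeM : row_free M.
  rewrite -kermx_eq0; apply/negP => nzK.
  have modK : mxmodule (rf_rep R u) (kermx M).
    apply/mxmoduleP => h hH; apply/sub_kermxP.
    by rewrite -mulmxA hM // mulmxA mulmx_ker mul0mx.
  have := irru _ modK (introN idP nzK); rewrite -sub1mx => /sub_kermxP.
  by rewrite mul1mx => eM; rewrite eM eqxx in nzM.
case: (eqVneq u v) => // nuv; case: (inequiv _ _ nuv).
by exists M => //; exact: (etrans (esym (eqP freeM)) (eqP fullM)).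
Qed.

Lemma rep_family_commutant_scalar u (M : 'M[algC]_(rf_dim R u)) :
  (forall h, h \in H -> rf_rep R u h *m M = M *m rf_rep R u h) -> is_scalar_mx M.
Proof.
case: irrR => irr _ _ hM.
apply: (mx_abs_irr_cent_scalar (group_closure_closed_field (irr u))).
by apply/centgmxP => h hH; rewrite hM.
Qed.

Lemma rep_family_intertwiner_entry u v (F : nat -> nat -> algC) :
  (forall h, h \in H -> forall i j, (i < rf_dim R u)%N -> (j < rf_dim R v)%N ->
    \sum_(t < rf_dim R u) nat_entry (rf_rep R u h) i t * F t j =
    \sum_(t < rf_dim R v) F i t * nat_entry (rf_rep R v h) t j) ->
  forall i j, (i < rf_dim R u)%N -> (j < rf_dim R v)%N -> F i j != 0 ->
  u = v /\ i = j.
Proof.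
move=> hF i j hi hj nz.
pose M : 'M[algC]_(rf_dim R u, rf_dim R v) := \matrix_(a, b) F a b.
have hM h : h \in H -> rf_rep R u h *m M = M *m rf_rep R v h.
  move=> hH; apply/matrixP => a b; rewrite !mxE.
  have := hF h hH a b (ltn_ord a) (ltn_ord b).
  under eq_bigr do rewrite nat_entryE.
  under [in X in _ = X -> _]eq_bigr do rewrite nat_entryE.
  by move=> e; under eq_bigr do rewrite mxE; under [RHS]eq_bigr do rewrite mxE.
have nzM : M != 0.
  apply: contraNneq nz => /matrixP /(_ (Ordinal hi) (Ordinal hj)).
  by rewrite !mxE => ->.
have uv := rep_family_intertwiner_eq hM nzM; subst v; split => //.
have /is_scalar_mxP [c /matrixP /(_ (Ordinal hi) (Ordinal hj))] :=
  rep_family_commutant_scalar hM.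
rewrite !mxE => e; apply/eqP; apply: contraNT nz => nij.
by rewrite e (_ : (Ordinal hi == Ordinal hj) = false) ?mulr0n //; apply/negbTE.
Qed.

Lemma blockdiag_intertwiner_support s s' (T : nat -> nat -> algC) :
  (forall h, h \in H -> forall a b, (a < blk_start R s (size s))%N ->
     (b < blk_start R s' (size s'))%N ->
   \sum_(c < blk_start R s (size s)) blockdiag_entry R s h a c * T c b =
   \sum_(c < blk_start R s' (size s')) T a c * blockdiag_entry R s' h c b) ->
  forall (p : 'I_(size s)) (q : 'I_(size s')) i j,
   (i < rf_dim R (tnth (in_tuple s) p))%N -> (j < rf_dim R (tnth (in_tuple s') q))%N ->
   T (blk_start R s p + i) (blk_start R s' q + j) != 0 ->
   tnth (in_tuple s) p = tnth (in_tuple s') q /\ i = j.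
Proof.
move=> hT p q i j hi hj.
apply: (rep_family_intertwiner_entry
  (F := fun a b => T (blk_start R s p + a) (blk_start R s' q + b))) => // h hH a b ha hb.
have := hT h hH _ _ (blk_pos_lt ha) (blk_pos_lt hb).
rewrite (@blockdiag_row_mul _ _ _ s h p a (fun c => T c (blk_start R s' q + b)) ha).
by rewrite (@blockdiag_col_mul _ _ _ s' h q b (fun c => T (blk_start R s p + a) c) hb).
Qed.

End Schur.

Lemma sum_count_mem (T : finType) (s : seq T) (F : T -> nat) :
  (\sum_(t <- s) F t = \sum_i count_mem i s * F i)%N.
Proof.
elim: s => [|x s IH]; first by rewrite big_nil big1 // => i _; rewrite mul0n.
rewrite big_cons IH.
rewrite [RHS](eq_bigr (fun i => (x == i) * F i + count_mem i s * F i)%N); last first.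
  by move=> i _; rewrite /= mulnDl.
rewrite big_split /= [X in (_ = X + _)%N](bigD1 x) //= eqxx mul1n.
rewrite [X in (_ = _ + X + _)%N]big1 ?addn0 // => i nix.
by rewrite eq_sym (negbTE nix).
Qed.

Lemma card_tnth_eq (I : eqType) (s : seq I) u :
  #|[set p : 'I_(size s) | tnth (in_tuple s) p == u]| = count_mem u s.
Proof.
transitivity (\sum_(p < size s) (tnth (in_tuple s) p == u : nat))%N.
  rewrite -sum1_card big_mkcond /=; apply: eq_bigr => p _; rewrite inE.
  by case: (_ == _).
rewrite -(big_tnth 0%N addn s xpredT (fun t => (t == u : nat))) -sum1_count.
by rewrite [RHS]big_mkcond /=; apply: eq_bigr => t _; case: (t == u).
Qed.

Section OrbitPair.
Local Open Scope ring_scope.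
Variables (gT : finGroupType) (G H : {group gT}) (B B' : 'M[algC]_#|{: gT}|) (x1 : gT).
Hypotheses (uB : B \in unitmx) (orbB : forall k, exists x, col_in (G :* x)%g B k).
Hypotheses (uB' : B' \in unitmx) (orbB' : forall k, exists x, col_in (H :* x)%g B' k).
Hypothesis sHG : H \subset G.
Local Notation W := (G :* x1)%g.
Local Notation K := [set k | col_in W B k].
Local Notation Z := (H :* x1)%g.
Local Notation K' := [set k | col_in Z B' k].
Local Notation iB := (invmx B).
Local Notation C := (invmx B *m B').
Variables (R : rep_family H) (s s' : seq 'I_(rf_num R)).
Hypothesis irrR : complete_irr_set R.
Hypothesis sizeK : (\sum_(t <- s) rf_dim R t)%N = #|K|.
Hypothesis adaptK : forall h, h \in H -> forall k : 'I_#|K|,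
  perm_act h *m col (enum_val k) B =
  \sum_(l < #|K|) blockdiag_entry R s h l k *: col (enum_val l) B.
Hypothesis sizeK' : (\sum_(t <- s') rf_dim R t)%N = #|K'|.
Hypothesis adaptK' : forall h, h \in H -> forall k : 'I_#|K'|,
  perm_act h *m col (enum_val k) B' =
  \sum_(l < #|K'|) blockdiag_entry R s' h l k *: col (enum_val l) B'.

Lemma sub_orbit : Z \subset W.
Proof. by rewrite rcosetS. Qed.

Lemma change_basis_intertwines h (hH : h \in H) (a : 'I_#|K|) (b : 'I_#|K'|) :
  \sum_(c < #|K|) blockdiag_entry R s h a c * C (enum_val c) (enum_val b) =
  \sum_(c < #|K'|) C (enum_val a) (enum_val c) * blockdiag_entry R s' h c b.
Proof.
set v := col (enum_val b) B'.
have supp_v y : v y 0 != 0 -> enum_val y \in W.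
  rewrite mxE => nz; apply: (subsetP sub_orbit).
  by have := enum_valP b; rewrite inE => /col_inP; exact.
have hv : perm_act h *m v = \sum_(c < #|K|)
    (\sum_(c' < #|K|) blockdiag_entry R s h c c' * (iB *m v) (enum_val c') 0)
      *: col (enum_val c) B.
  rewrite {1}(orbit_expand uB orbB supp_v) mulmx_sumr.
  under eq_bigr do rewrite -scalemxAr adaptK // scaler_sumr.
  rewrite exchange_big /=; apply: eq_bigr => c _; rewrite scaler_suml.
  by apply: eq_bigr => c' _; rewrite scalerA mulrC.
rewrite (eq_bigr (fun c : 'I_#|K| => blockdiag_entry R s h a c * (iB *m v) (enum_val c) 0)); last first.
  by move=> c _; rewrite mulmx_col_entry.
have := congr1 (fun w => (iB *m w) (enum_val a) 0) hv; rewrite /= invmx_coord // => <-.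
rewrite adaptK' // mulmx_sumr summxE; apply: eq_bigr => c _.
by rewrite -scalemxAr mxE mulmx_col_entry mulrC.
Qed.

Lemma change_basis_out k l : l \in K' -> k \notin K -> C k l = 0.
Proof.
move=> lK nk; have [x cx] := orbB k.
rewrite mxE big1 // => y _.
case: (eqVneq (B' y l) 0) => [->|nz]; first by rewrite mulr0.
have yW : enum_val y \in W.
  by apply: (subsetP sub_orbit); move: lK; rewrite inE => /col_inP; apply.
rewrite (invmx_orbit_out (x0 := x) uB orbB (k := k) (y := y)) ?mul0r ?inE //.
apply: contra nk => yx; rewrite inE.
by have <- : (G :* x)%g = W by rewrite -(rcoset_eqP yx) (rcoset_eqP yW).
Qed.

Lemma orbit_multiplicity_index u : count_mem u s = (rf_dim R u * #|G : H|%g)%N.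
Proof.
have := orbit_multiplicity uB orbB sizeK adaptK irrR u.
rewrite -(Lagrange sHG) mulnCA => /eqP; rewrite [X in X == _]mulnC.
by rewrite eqn_pmul2l ?cardG_gt0 // => /eqP.
Qed.

Lemma regular_multiplicity u : count_mem u s' = rf_dim R u.
Proof.
have := orbit_multiplicity uB' orbB' sizeK' adaptK' irrR u.
by move/eqP; rewrite eqn_pmul2r ?cardG_gt0 // => /eqP.
Qed.

Let k0 := enum_rank (1%g : gT).
(* The block of C with rows in K and columns in K', indexed by positions in
   enum K and enum K'. *)
Let T a b := C (nth k0 (enum K) a) (nth k0 (enum K') b).

Lemma change_basis_intertwines_nat h (hH : h \in H) a b :
  (a < blk_start R s (size s))%N -> (b < blk_start R s' (size s'))%N ->
  \sum_(c < blk_start R s (size s)) blockdiag_entry R s h a c * T c b =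
  \sum_(c < blk_start R s' (size s')) T a c * blockdiag_entry R s' h c b.
Proof.
rewrite !blk_start_size sizeK sizeK' => ha hb.
rewrite /T -[nth k0 (enum K') b](enum_val_nth k0 (Ordinal hb)).
rewrite -[nth k0 (enum K) a](enum_val_nth k0 (Ordinal ha)).
under eq_bigr do rewrite -(enum_val_nth k0).
under [RHS]eq_bigr do rewrite -(enum_val_nth k0).
exact: (change_basis_intertwines hH (Ordinal ha) (Ordinal hb)).
Qed.

(* By Schur's lemma, the nonzero entries of the column of C at position j of a
   block of type rho sit at position j of the blocks of type rho of s. *)
Lemma change_basis_col_nnz (b : 'I_#|K'|) (q : 'I_(size s')) j :
  (j < rf_dim R (tnth (in_tuple s') q))%N -> val b = (blk_start R s' q + j)%N ->
  (#|[set k | C k (enum_val b) != 0%R]| <= count_mem (tnth (in_tuple s') q) s)%N.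
Proof.
move=> hj eb.
pose F (p : 'I_(size s)) := nth k0 (enum K) (blk_start R s p + j).
pose P := [set p : 'I_(size s) | tnth (in_tuple s) p == tnth (in_tuple s') q].
suff supp : [set k | C k (enum_val b) != 0] \subset F @: P.
  by rewrite -card_tnth_eq (leq_trans (subset_leq_card supp)) ?leq_imset_card.
apply/subsetP => k; rewrite inE => nz.
have kK : k \in K.
  by apply/negPn/negP => nK; rewrite change_basis_out ?enum_valP ?eqxx in nz.
have ek : enum_val (enum_rank_in kK k) = k := enum_rankK_in kK kK.
have ha : (enum_rank_in kK k < blk_start R s (size s))%N.
  by rewrite blk_start_size sizeK ltn_ord.
have [p [i hi ea]] := blk_pos_exists ha.
have nzT : T (blk_start R s p + i) (blk_start R s' q + j) != 0.
  by rewrite /T -ea -eb -!(enum_val_nth k0) ek.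
have [eu eij] := blockdiag_intertwiner_support irrR change_basis_intertwines_nat hi hj nzT.
apply/imsetP; exists p; first by rewrite inE eu.
by rewrite /F -eij -ea -(enum_val_nth k0) ek.
Qed.

Lemma change_basis_orbit_nnz :
  (\sum_(l in K') #|[set k | C k l != 0%R]| <= #|G : H|%g * d3 R)%N.
Proof.
pose f c := #|[set k | C k (nth k0 (enum K') c) != 0%R]|.
rewrite big_enum_val /= (eq_bigr (fun b : 'I_#|K'| => f b)); last first.
  by move=> b _; rewrite /f -(enum_val_nth k0).
rewrite -sizeK' -blk_start_size (big_blk _ _ f).
apply: (@leq_trans (\sum_(q < size s') \sum_(j < rf_dim R (tnth (in_tuple s') q))
                     count_mem (tnth (in_tuple s') q) s)%N).
  apply: leq_sum => q _; apply: leq_sum => j _.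
  have hb : (blk_start R s' q + j < #|K'|)%N by rewrite -sizeK' -blk_start_size blk_pos_lt.
  have := change_basis_col_nnz (b := Ordinal hb) (ltn_ord j) erefl.
  by rewrite /f (enum_val_nth k0).
rewrite (eq_bigr (fun q => rf_dim R (tnth (in_tuple s') q) ^ 2 * #|G : H|%g)%N); last first.
  by move=> q _; rewrite sum_nat_const card_ord orbit_multiplicity_index mulnA mulnn.
rewrite -big_distrl /= mulnC leq_mul2l; apply/orP; right.
rewrite -(big_tnth 0%N addn s' xpredT (fun t => rf_dim R t ^ 2)%N) /= sum_count_mem.
by apply/eq_leq/eq_bigr => i _; rewrite regular_multiplicity -expnS.
Qed.

End OrbitPair.

Lemma unitmx_col_neq0 n (B : 'M[algC]_n) l : B \in unitmx -> exists y, B y l != 0%R.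
Proof.
move=> uB; apply/existsP; apply: contraTT (uB) => /existsPn B0.
have : ((invmx B *m B) l l = 1)%R by rewrite mulVmx // mxE eqxx.
rewrite mxE big1 => [/eqP|y _]; first by rewrite eq_sym oner_eq0.
by have /negPn/eqP -> := B0 y; rewrite mulr0.
Qed.

Lemma unitmx_row_neq0 n (B : 'M[algC]_n) l : B \in unitmx -> exists y, B l y != 0%R.
Proof.
move=> uB; have uBT : (B^T \in unitmx)%R by rewrite unitmx_tr.
by have [y] := unitmx_col_neq0 l uBT; rewrite mxE; exists y.
Qed.

Section ChangeOfBasis.
Variables (gT : finGroupType) (G H : {group gT}) (B B' : 'M[algC]_#|{: gT}|).
Variable R : rep_family H.
Hypotheses (uB : B \in unitmx) (orbB : forall k, exists x, col_in (G :* x)%g B k).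
Hypotheses (uB' : B' \in unitmx) (orbB' : forall k, exists x, col_in (H :* x)%g B' k).
Hypotheses (sHG : H \subset G) (irrR : complete_irr_set R).
Hypothesis adaptB : forall x,
  sym_adapted R (fun l : 'I_#|[set k | col_in (G :* x)%g B k]| => col (enum_val l) B).
Hypothesis adaptB' : forall x,
  sym_adapted R (fun l : 'I_#|[set k | col_in (H :* x)%g B' k]| => col (enum_val l) B').

Let orbit_of (l : 'I_#|{: gT}|) : {set gT} :=
  (H :* enum_val (odflt (enum_rank (1%g : gT)) [pick y | B' y l != 0%R]))%g.

Lemma orbit_ofE l x : (orbit_of l == (H :* x)%g) = col_in (H :* x)%g B' l.
Proof.
rewrite /orbit_of; case: pickP => [y nz|B'0]; last first.
  by have [y] := unitmx_col_neq0 l uB'; rewrite B'0.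
have [x' cx'] := orbB' l; have yx' := col_inP _ _ _ cx' y nz.
apply/eqP/idP => [<-|cx]; first by rewrite (rcoset_eqP yx').
exact/rcoset_eqP/(col_inP _ _ _ cx y nz).
Qed.

Lemma change_basis_nnz :
  (\sum_i nnz_row (change_basis B B') i <= #|[set: gT] : H|%g * (#|G : H|%g * d3 R))%N.
Proof.
rewrite /nnz_row /change_basis; under eq_bigr do rewrite -sum1dep_card.
rewrite (exchange_big_dep xpredT) //=; under eq_bigr do rewrite sum1dep_card.
rewrite (partition_big orbit_of (mem (rcosets H [set: gT]))) /=; last first.
  by move=> l _; rewrite mem_rcosets -[X in X \in _]mul1g mem_mulg ?group1 ?inE.
rewrite -sum_nat_const; apply: leq_sum => _ /rcosetsP [x _ ->].
have [s [sizeK adaptK]] := adaptB x; have [s' [sizeK' adaptK']] := adaptB' x.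
apply: leq_trans _ (change_basis_orbit_nnz uB orbB uB' orbB' sHG irrR
  sizeK adaptK sizeK' adaptK').
rewrite big_mkcond [X in (_ <= X)%N]big_mkcond /=; apply/eq_leq/eq_bigr => l _.
by rewrite orbit_ofE inE.
Qed.

End ChangeOfBasis.

Lemma sparse_mv_cost_lt n (C : 'M[algC]_n) i0 j0 :
  C i0 j0 != 0%R -> (sparse_mv_cost C < 2 * \sum_i nnz_row C i)%N.
Proof.
move=> nz; have pos : (0 < nnz_row C i0)%N.
  by rewrite /nnz_row card_gt0; apply/set0Pn; exists j0; rewrite inE.
rewrite /sparse_mv_cost (bigD1 i0) //= [X in (_ < 2 * X)%N](bigD1 i0) //= mulnDr.
rewrite -addSn leq_add ?big_distrr ?leq_sum //; first lia.
by move=> i _; case: (nnz_row C i) => //= r; lia.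
Qed.

Lemma ltn_sum_nat m n (a b : nat -> nat) : (m < n)%N ->
  (forall j, (m <= j < n)%N -> (a j < b j)%N) ->
  (\sum_(m <= j < n) a j < \sum_(m <= j < n) b j)%N.
Proof.
move=> mn ab; rewrite !(big_ltn mn) -addSn leq_add ?ab ?leqnn //.
rewrite big_nat_cond [X in (_ <= X)%N]big_nat_cond leq_sum // => j /andP[jmn _].
by apply/ltnW/ab; lia.
Qed.

Lemma indexg_chain (gT : finGroupType) (Gs : nat -> {group gT}) n j :
  Gs n = [set: gT] :> {set gT} ->
  (forall k, (j < k <= n)%N -> Gs k.-1 \subset Gs k) -> (j <= n)%N ->
  #|[set: gT] : Gs j|%g = (\prod_(j.+1 <= k < n.+1) #|Gs k : Gs k.-1|%g)%N.
Proof.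
move=> Gn sGs; move Dm: (n - j) => m; elim: m j Dm sGs => [|m IH] j Dm sGs jn.
  have -> : j = n by lia.
  by rewrite big_geq // Gn (indexgg [set: gT]%G).
rewrite big_ltn; last lia.
rewrite -IH; [|lia|by move=> k hk; apply: sGs; lia|lia].
by rewrite mulnC Lagrange_index ?subsetT //; apply: sGs; lia.
Qed.

Unset Implicit Arguments.

Theorem theorem6 (gT : finGroupType) (n : nat) (Gs : nat -> {group gT})
  (Rs : forall j, rep_family (Gs j)) (Bs : nat -> 'M[algC]_#|{: gT}|) :
  (1 < n)%N ->
  Gs 1%N = 1%G :> {set gT} ->
  Gs n = [set: gT] :> {set gT} ->
  (forall j, (1 < j <= n)%N -> Gs j.-1 \proper Gs j) ->
  (forall j, (1 <= j <= n)%N -> complete_irr_set (Rs j)) ->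
  (* compatibility of R(G_1), ..., R(G_n) with respect to CX *)
  (exists B : 'M[algC]_#|{: gT}|, B \in unitmx /\
     forall j, (1 <= j <= n)%N -> sym_adapted (Rs j) (fun k => col k B)) ->
  Bs 1%N = (1%:M)%R ->
  (forall j, (1 <= j <= n)%N -> orbital_sa Rs j (Bs j)) ->
  (\sum_(2 <= j < n.+1) sparse_mv_cost (change_basis (Bs j) (Bs j.-1))
   < 2 * \sum_(2 <= j < n.+1)
           #|Gs j : Gs j.-1|%g ^ 2 * (\prod_(j.+1 <= k < n.+1) #|Gs k : Gs k.-1|%g)
           * d3 (Rs j.-1))%N.
Proof.
move=> n_gt1 _ Gn properGs irrRs _ _ orbBs.
rewrite big_distrr /=; apply: ltn_sum_nat => [|j /andP[j_ge2 j_le_n]]; first lia.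
have [uB orbB adaptB] := orbBs j ltac:(lia).
have [uB' orbB' adaptB'] := orbBs j.-1 ltac:(lia).
have sGs k : (1 < k <= n)%N -> Gs k.-1 \subset Gs k by move/properGs/proper_sub.
have nnz := change_basis_nnz uB orbB uB' orbB' (sGs j ltac:(lia)) (irrRs j.-1 ltac:(lia))
  (fun x => adaptB x j.-1 ltac:(lia)) (fun x => adaptB' x j.-1 ltac:(lia)).
have uC : change_basis (Bs j) (Bs j.-1) \in unitmx.
  by rewrite unitmx_mul unitmx_inv uB uB'.
have [y nz] := unitmx_row_neq0 (enum_rank (1%g : gT)) uC.
apply: leq_trans (sparse_mv_cost_lt nz) _; rewrite leq_mul2l /=.
apply: leq_trans nnz _; rewrite (indexg_chain Gn (j := j.-1)); last 2 first.
- by move=> k hk; apply: sGs; lia.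
- lia.
have ej : j.-1.+1 = j by lia.
by rewrite big_ltn ej; [apply/eq_leq; ring | lia].
Qed.
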